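(* Let $E$ be a fixed-point equation system with interpretation $[\![E]\!]\colon\mathbb{E}(D)\to\mathbb{E}(D)$, and let $\eta'\in\mathbb{E}(D)$. Then $\eta'\le\mu[\![E]\!]$ holds if there exist: (a) a fixed-point equation system $E'$ over the same quantitative predicate variables such that $[\![E']\!]\le[\![E]\!]$ (i.e. $[\![E']\!](\eta)\le[\![E]\!](\eta)$ for all $\eta\in\mathbb{E}(D)$); (b) $u\in\mathbb{E}(D)$ with $[\![E']\!](u)\le u$; (c) a function $r\colon D\to[0,\infty)$ with $(\mathsf{D}[\![E']\!])(r)+u\le r$; and (d) $\eta'\le u$ together with $\eta'\le[\![E']\!](\eta')$.
   Context: $\mathbb{E}(D)$ is the set of functions $D\to[0,\infty]$ with pointwise order and operations ($\infty+x=\infty$, $0\cdot\infty=0$, $r\cdot\infty=\infty$ for $r>0$); for $x\ge y$ in $[0,\infty]$, $x-y$ is the least $z$ with $x=y+z$; $\mathbb{O}$ is the zero function; for a map $K$ on $\mathbb{E}(D)$, $(\mathsf{D}K)(\eta)=K(\eta)-K(\mathbb{O})$; $\mu K$ is the least fixed point. Quantitative formulas over quantitative predicate variables $X_1,\dots,X_n$ (with $X_j$ of type $D_j\to\Omega$) are given by $F ::= X_j(\tilde e)\mid t\mid F_1+F_2\mid t\cdot F\mid \mathbf{if}\ \varphi\ \mathbf{then}\ F_1\ \mathbf{else}\ F_2$, where $\tilde e$ are expressions (functions of the term variables) of the argument data types, $t$ is a term taking values in $[0,\infty)$, and $\varphi$ is a boolean expression. For $\eta=(\eta_1,\dots,\eta_n)$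 and a valuation $v$ of the term variables: $[\![X_j(e)]\!](\eta)(v)=\eta_j([\![e]\!](v))$, $[\![t]\!](\eta)(v)=[\![t]\!](v)$, sums and scalar products pointwise, and the conditional by cases on $[\![\varphi]\!](v)$. A fixed-point equation system is $E=\{X_i(\tilde x_i)=_\mu F_i\}_{i=1}^n$ with $\tilde x_i$ ranging over $D_i$ and $F_i$ having free term variables among $\tilde x_i$; with $D=\coprod_j D_j$ and $\prod_j\mathbb{E}(D_j)\cong\mathbb{E}(D)$, its interpretation is $[\![E]\!](\eta)=([\![F_1]\!](\eta),\dots,[\![F_n]\!](\eta))$. *)

From HB Require Import structures.
From mathcomp Require Import all_boot all_order all_algebra.
From mathcomp Require Import classical_sets reals constructive_ereal ereal.
Set Implicit Arguments. Unset Strict Implicit. Unset Printing Implicit Defensive.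
Import Order.TTheory GRing.Theory Num.Theory.
Local Open Scope ring_scope.
Local Open Scope ereal_scope.
Local Open Scope classical_set_scope.

Section QFP.
Variable R : realType.

(** Elements of E(D): functions D -> [0,oo], represented as functions into
    \bar R that are pointwise nonnegative. *)
Definition nonnegf (D : Type) (f : D -> \bar R) : Prop := forall d, 0 <= f d.

Definition leF (D : Type) (f g : D -> \bar R) : Prop := forall d, f d <= g d.

Definition zeroF (D : Type) : D -> \bar R := fun _ => 0.

(** truncated difference on [0,oo]: for x >= y, x - y is the least z with
    x = y + z  (so oo - oo = 0, oo - y = oo for finite y, and the usual
    difference for finite values). *)
Definition esubp (x y : \bar R) : \bar R := if y == +oo then 0 else x - y.

Definition Dop (D : Type) (K : (D -> \bar R) -> (D -> \bar R))
  (eta : D -> \bar R) : D -> \bar R :=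
  fun d => esubp (K eta d) (K (@zeroF D) d).

(** least fixed point of K on E(D): the pointwise infimum of all prefixed
    points in E(D) (Knaster--Tarski; this is the least fixed point of any
    monotone K on the complete lattice E(D)). *)
Definition mu (D : Type) (K : (D -> \bar R) -> (D -> \bar R)) : D -> \bar R :=
  fun d => ereal_inf [set x d | x in [set x | nonnegf x /\ leF (K x) x]].

(** Quantitative formulas over predicate variables X_1..X_n with X_j of type
    Dt j -> Omega, whose free term variables range over a valuation type V.
    Expressions, terms and boolean expressions are given by their semantics
    as functions of the valuation; terms take values in [0,oo). *)
Inductive qform (n : nat) (Dt : 'I_n -> Type) (V : Type) : Type :=
| QVar (j : 'I_n) (e : V -> Dt j)
| QTerm (t : V -> {nonneg R})
| QAdd (F1 F2 : qform Dt V)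
| QScale (t : V -> {nonneg R}) (F : qform Dt V)
| QIf (phi : V -> bool) (F1 F2 : qform Dt V).

Definition Dsum (n : nat) (Dt : 'I_n -> Type) : Type := {j : 'I_n & Dt j}.

Fixpoint qsem (n : nat) (Dt : 'I_n -> Type) (V : Type) (F : qform Dt V)
  (eta : Dsum Dt -> \bar R) (v : V) : \bar R :=
  match F with
  | QVar j e => eta (existT _ j (e v))
  | QTerm t => ((t v)%:num)%:E
  | QAdd F1 F2 => qsem F1 eta v + qsem F2 eta v
  | QScale t F => ((t v)%:num)%:E * qsem F eta v
  | QIf phi F1 F2 => if phi v then qsem F1 eta v else qsem F2 eta v
  end.

(** A fixed-point equation system {X_i(x_i) =mu F_i}_{i=1..n}: F_i has its
    free term variables among x_i, which range over Dt i. *)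
Definition eqsys (n : nat) (Dt : 'I_n -> Type) : Type :=
  forall i : 'I_n, qform Dt (Dt i).

Definition esem (n : nat) (Dt : 'I_n -> Type) (E : eqsys Dt)
  (eta : Dsum Dt -> \bar R) : Dsum Dt -> \bar R :=
  fun d => qsem (E (projT1 d)) eta (projT2 d).

End QFP.

(* [[E']] is affine: [[E']](eta) = c + L eta with c finite and L monotone,
   additive and positively homogeneous on E(D), and (c) says L r + u <= r.
   Let x be a prefixed point of [[E]].  If eta' <= x + r/a, then
     eta' <= [[E']](eta') <= [[E']](x + r/a) = [[E']](x) + (L r)/a
          <= x + (L r)/a,
   and multiplying by a and adding eta' <= u <= r - L r gives
   (a+1) eta' <= a x + r, so eta' <= x + r/(a+1).  Starting from a = 1 we
   get eta' <= x + r/(k+1) for all k, hence eta' <= x. *)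

From HB Require Import structures.
From mathcomp Require Import all_boot all_order all_algebra.
From mathcomp Require Import classical_sets reals constructive_ereal ereal.
From mathcomp Require Import lra.
Import Order.TTheory GRing.Theory Num.Theory.
Set Implicit Arguments.
Unset Strict Implicit.
Local Open Scope ring_scope.

Lemma ler_contract_step (R : realType) (a e x l u r : R) :
  0 < a -> 0 <= x -> l + u <= r -> e <= u -> e <= x + a^-1 * l ->
  e <= x + (a + 1)^-1 * r.
Proof.
move=> a_gt0 x_ge0 lur eu exl.
have a1_gt0 : 0 < a + 1 by rewrite addr_gt0.
have aexl : a * e <= a * x + l.
  by rewrite -ler_pdivlMl // mulrDr mulKf ?gt_eqF.
have -> : x + (a + 1)^-1 * r = (a + 1)^-1 * ((a + 1) * x + r).
  by rewrite mulrDr mulKf ?gt_eqF.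
by rewrite ler_pdivlMl //; nra.
Qed.

Local Open Scope ereal_scope.

Lemma lee_contract_step (R : realType) (a r : R) (e x l u : \bar R) :
  (0 < a)%R -> 0 <= x -> 0 <= l -> 0 <= u ->
  l + u <= r%:E -> e <= u -> e <= x + a^-1%:E * l ->
  e <= x + (a + 1)^-1%:E * r%:E.
Proof.
move=> a_gt0; move: x l u => [x| |] [l| |] [u| |] //= x_ge0 _ _.
case: e => [e| |] //; rewrite ?leNye // -!EFinM -!EFinD !lee_fin.
exact: ler_contract_step.
Qed.

Lemma lee_addinvS (R : realType) (r : R) (e x : \bar R) :
  (forall k : nat, e <= x + k.+1%:R^-1%:E * r%:E) -> e <= x.
Proof.
move=> h; apply/lee_addgt0Pr => eps eps_gt0.
pose k := Num.truncn (r / eps).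
have k1_gt0 : (0 < k.+1%:R :> R)%R by rewrite ltr0n.
apply: (le_trans (h k)); apply: leeD => //; rewrite -EFinM lee_fin.
rewrite mulrC ler_pdivrMr // mulrC -ler_pdivrMr //.
exact: ltW (truncnS_gt _).
Qed.

Section QformAffine.
Variables (R : realType) (n : nat) (Dt : 'I_n -> Type) (V : Type).
Implicit Types (F : qform R Dt V) (a b : Dsum Dt -> \bar R) (v : V).

Fixpoint qlin F a v : \bar R :=
  match F with
  | QVar j e => a (existT _ j (e v))
  | QTerm _ => 0
  | QAdd F1 F2 => qlin F1 a v + qlin F2 a v
  | QScale t F => ((t v)%:num)%:E * qlin F a v
  | QIf phi F1 F2 => if phi v then qlin F1 a v else qlin F2 a v
  end.

Fixpoint qcst F v : R :=
  match F with
  | QVar _ _ => 0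
  | QTerm t => (t v)%:num
  | QAdd F1 F2 => qcst F1 v + qcst F2 v
  | QScale t F => (t v)%:num * qcst F v
  | QIf phi F1 F2 => if phi v then qcst F1 v else qcst F2 v
  end%R.

Lemma qcst_ge0 F v : (0 <= qcst F v)%R.
Proof.
elim: F v => [j e|t|F1 IH1 F2 IH2|t F IH|phi F1 IH1 F2 IH2] v //=.
- by rewrite addr_ge0.
- by rewrite mulr_ge0.
- by case: (phi v).
Qed.

Lemma qlin_ge0 F a v : nonnegf a -> 0 <= qlin F a v.
Proof.
move=> a_ge0; elim: F v => [j e|t|F1 IH1 F2 IH2|t F IH|phi F1 IH1 F2 IH2] v //=.
- by rewrite adde_ge0.
- by rewrite mule_ge0.
- by case: (phi v).
Qed.

Lemma qsemE F a v : nonnegf a -> qsem F a v = (qcst F v)%:E + qlin F a v.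
Proof.
move=> a_ge0; elim: F v => [j e|t|F1 IH1 F2 IH2|t F IH|phi F1 IH1 F2 IH2] v /=.
- by rewrite add0e.
- by rewrite adde0.
- by rewrite IH1 IH2 EFinD addeACA.
- by rewrite IH ge0_muleDr ?lee_fin ?qcst_ge0 ?qlin_ge0 // EFinM.
- by case: (phi v).
Qed.

Lemma qlin0 F v : qlin F (@zeroF R _) v = 0.
Proof.
elim: F v => [j e|t|F1 IH1 F2 IH2|t F IH|phi F1 IH1 F2 IH2] v //=.
- by rewrite IH1 IH2 adde0.
- by rewrite IH mule0.
- by case: (phi v).
Qed.

Lemma qlinDZ F (s : R) a b v : (0 <= s)%R -> nonnegf a -> nonnegf b ->
  qlin F (fun d => a d + s%:E * b d) v = qlin F a v + s%:E * qlin F b v.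
Proof.
move=> s_ge0 a_ge0 b_ge0.
elim: F v => [j e|t|F1 IH1 F2 IH2|t F IH|phi F1 IH1 F2 IH2] v //=.
- by rewrite mule0 adde0.
- by rewrite IH1 IH2 ge0_muleDr ?qlin_ge0 // addeACA.
- by rewrite IH ge0_muleDr ?mule_ge0 ?qlin_ge0 // muleCA.
- by case: (phi v).
Qed.

Lemma le_qsem F a b v : leF a b -> qsem F a v <= qsem F b v.
Proof.
move=> le_ab; elim: F v => [j e|t|F1 IH1 F2 IH2|t F IH|phi F1 IH1 F2 IH2] v /=.
- exact: le_ab.
- by [].
- exact: leeD.
- by apply: lee_wpmul2l; rewrite ?lee_fin.
- by case: (phi v).
Qed.

End QformAffine.

Section EqsysAffine.
Variables (R : realType) (n : nat) (Dt : 'I_n -> Type) (E : eqsys R Dt).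
Implicit Types (a b : Dsum Dt -> \bar R).

Definition esem_lin a d : \bar R := qlin (E (projT1 d)) a (projT2 d).

Lemma esem_lin_ge0 a d : nonnegf a -> 0 <= esem_lin a d.
Proof. exact: qlin_ge0. Qed.

Lemma le_esem a b : leF a b -> leF (esem E a) (esem E b).
Proof. by move=> le_ab d; apply: le_qsem. Qed.

Lemma DopE a d : nonnegf a -> Dop (esem E) a d = esem_lin a d.
Proof.
move=> a_ge0; have zero_ge0 : nonnegf (@zeroF R (Dsum Dt)) by [].
rewrite /Dop /esubp /esem !qsemE // qlin0 adde0 /=.
by rewrite EFinN [_%:E + _]addeC addeK.
Qed.

Lemma esemDZ (s : R) a b d : (0 <= s)%R -> nonnegf a -> nonnegf b ->
  esem E (fun d' => a d' + s%:E * b d') d = esem E a d + s%:E * esem_lin b d.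
Proof.
move=> s_ge0 a_ge0 b_ge0.
have ab_ge0 : nonnegf (fun d' => a d' + s%:E * b d').
  by move=> d'; rewrite adde_ge0 ?mule_ge0.
by rewrite /esem !qsemE // qlinDZ // addeA.
Qed.

End EqsysAffine.

Theorem theorem4p1 (R : realType) (n : nat) (Dt : 'I_n -> Type)
  (E : eqsys R Dt) (eta' : Dsum Dt -> \bar R) (heta' : nonnegf eta') :
  (exists E' : eqsys R Dt,
     (forall eta, nonnegf eta -> leF (esem E' eta) (esem E eta)) /\
     exists u : Dsum Dt -> \bar R, nonnegf u /\ leF (esem E' u) u /\
     exists r : Dsum Dt -> R, (forall d, (0 <= r d)%R) /\
       leF (fun d => Dop (esem E') (fun d' => (r d')%:E) d + u d)
           (fun d => (r d)%:E) /\
       leF eta' u /\ leF eta' (esem E' eta')) ->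
  leF eta' (mu (esem E)).
Proof.
move=> [E' [E'_le_E [u [u_ge0 [_ [r [r_ge0
  [Lr_u_le_r [eta'_le_u eta'_le_E'eta']]]]]]]]].
move=> d; apply/ereal_infP => _ [x [x_ge0 Ex_le_x] <-].
pose r' d := (r d)%:E.
have r'_ge0 : nonnegf r' by move=> d'; rewrite lee_fin.
have Lr_u_le_r' d' : esem_lin E' r' d' + u d' <= r' d'.
  by rewrite -DopE //; apply: Lr_u_le_r.
have u_le_r' d' : u d' <= r' d'.
  by apply: le_trans (Lr_u_le_r' d'); rewrite leeDr // esem_lin_ge0.
have approx k : leF eta' (fun d' => x d' + k.+1%:R^-1%:E * r' d').
  elim: k => [|k IH] d'.
    rewrite invr1 mul1e; apply: le_trans (eta'_le_u d') _.
    by apply: le_trans (u_le_r' d') _; rewrite leeDr.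
  rewrite -natr1.
  apply: (lee_contract_step _ _ _ _ (Lr_u_le_r' d') (eta'_le_u d')) => //.
    exact: esem_lin_ge0.
  apply: le_trans (eta'_le_E'eta' d') _.
  apply: le_trans (le_esem E' IH d') _.
  rewrite esemDZ // ?invr_ge0 //.
  apply: leeD => //; apply: le_trans (Ex_le_x d'); exact: E'_le_E.
exact: lee_addinvS (approx ^~ d).
Qed.
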